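(* Let $f(r)=r$, let $q_0\in\mathbb R^3\setminus\Sigma$, and let $\gamma$ be an arc-length parametrized normal trajectory from $q_0$ with initial covector $\lambda_0=(u_0,v_0,w_0)\in E_1$. Then $$t_{\mathrm{con}}(\gamma)=\frac{\pi}{|w_0|},$$ with the convention $t_{\mathrm{con}}(\gamma)=+\infty$ when $w_0=0$ (the straight-line geodesics).
   Context: Consider $\mathbb R^3$ with points $q=(x,y,z)$, $r=\sqrt{x^2+y^2}$, $\Sigma=\{r=0\}$, and $f(r)=r$. Let $q_0=(x_0,y_0,z_0)$ and $r_0=\sqrt{x_0^2+y_0^2}$. Normal trajectories are projections of solutions of $$\dot x=u,\quad \dot y=v,\quad \dot z=r^2w,\quad \dot u=-w^2x,\quad \dot v=-w^2y,\quad \dot w=0,$$ with initial covector $\lambda_0=(u_0,v_0,w_0)$. The unit energy shell is $E_1=\{\lambda_0:u_0^2+v_0^2+r_0^2w_0^2=1\}$. Exponential map and conjugate time: - $\mathrm{Exp}_{q_0}(\lambda_0)=\gamma(1;\lambda_0)$. - $t_{\mathrm{con}}(\gamma)=\inf\{t>0:\mathrm{Exp}_{q_0}\text{ has a critical point at }t\lambda_0\}$. *)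

From Stdlib Require Import Reals.
From Coquelicot Require Import Coquelicot.
Open Scope R_scope.

Definition R3 := (R * R * R)%type.

Definition normal_solution (q0 lam0 : R3)
  (x y z u v w : R -> R) : Prop :=
  let '(x0, y0, z0) := q0 in
  let '(u0, v0, w0) := lam0 in
  x 0 = x0 /\ y 0 = y0 /\ z 0 = z0 /\
  u 0 = u0 /\ v 0 = v0 /\ w 0 = w0 /\
  forall t : R,
    is_derive x t (u t) /\
    is_derive y t (v t) /\
    is_derive z t ((x t ^ 2 + y t ^ 2) * w t) /\
    is_derive u t (- (w t ^ 2) * x t) /\
    is_derive v t (- (w t ^ 2) * y t) /\
    is_derive w t 0.

Definition normal_flow (q0 : R3) (Gam : R3 -> R -> R3) : Prop :=
  forall lam0 : R3, exists u v w : R -> R,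
    normal_solution q0 lam0
      (fun t => fst (fst (Gam lam0 t)))
      (fun t => snd (fst (Gam lam0 t)))
      (fun t => snd (Gam lam0 t)) u v w.

Definition Exp (Gam : R3 -> R -> R3) (lam : R3) : R3 := Gam lam 1.

Definition critical_point (f : R3 -> R3) (p : R3) : Prop :=
  exists L : R3 -> R3,
    filterdiff f (locally p) L /\ ~ (forall y : R3, exists h : R3, L h = y).

Definition scal3 (t : R) (lam : R3) : R3 :=
  let '(a, b, c) := lam in (t * a, t * b, t * c).

(* t_con(gamma) = inf { t > 0 : Exp_{q0} has a critical point at t lam0 },
   as an extended real (+oo for the empty set). *)
Definition t_con (Gam : R3 -> R -> R3) (lam0 : R3) : Rbar :=
  Glb_Rbar (fun t => 0 < t /\ critical_point (Exp Gam) (scal3 t lam0)).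

From Stdlib Require Import Reals Lra Psatz FunctionalExtensionality.
From Coquelicot Require Import Coquelicot.
Open Scope R_scope.

(* The normal system integrates in closed form: [w] is constant, [(x, y)] is a harmonic
   oscillation of frequency [w], and [z] is obtained by integrating [r^2 w].  So the
   exponential map is explicit.  For [w <> 0] its Jacobian determinant factors as
   [sin w / w] times [sin w / w * (r0^2 + <q0, l>) + |l|^2 (sin w - w cos w) / w^3],
   where [l = (u, v)]; completing the square shows that the second factor is positive
   for [0 < |w| < pi], while at [|w| = pi] the first two columns lose their horizontal
   part.  At [w = 0] the Jacobian is triangular with positive diagonal.  Along
   [t |-> t lam0] the first critical point is therefore reached at [t |w0| = pi], and
   never when [w0 = 0]. *)

Lemma is_derive_0_const (g : R -> R) :
  (forall t, is_derive g t 0) -> forall t, g t = g 0.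
Proof.
  intros Dg t. destruct (Rtotal_order t 0) as [Hlt|[->|Hgt]].
  - apply (eq_is_derive g t 0); [intros; apply Dg | lra].
  - reflexivity.
  - symmetry. apply (eq_is_derive g 0 t); [intros; apply Dg | lra].
Qed.

Lemma harmonic_zero (w : R) (e d : R -> R) :
  e 0 = 0 -> d 0 = 0 ->
  (forall t, is_derive e t (d t)) -> (forall t, is_derive d t (- (w ^ 2) * e t)) ->
  forall t, e t = 0.
Proof.
  intros e0 d0 De Dd.
  set (E := fun t => d t * d t + w ^ 2 * (e t * e t)).
  assert (DE : forall t, is_derive E t 0).
  { intro t. evar (l : R). replace 0 with l.
    - apply (is_derive_plus (fun t => d t * d t) (fun t => w ^ 2 * (e t * e t))).
      + apply (is_derive_mult d d); auto. apply Rmult_comm.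
      + apply (is_derive_scal (fun t => e t * e t)).
        apply (is_derive_mult e e); auto. apply Rmult_comm.
    - unfold l, plus, mult, scal; simpl. unfold mult; simpl. ring. }
  assert (d_zero : forall t, d t = 0).
  { intro t. pose proof (is_derive_0_const E DE t) as Et.
    unfold E in Et. rewrite e0, d0 in Et. nra. }
  assert (De0 : forall t, is_derive e t 0) by (intro t; rewrite <- (d_zero t); apply De).
  intro t. rewrite (is_derive_0_const e De0 t). exact e0.
Qed.

Definition osc (w x0 u0 t : R) : R :=
  if Req_EM_T w 0 then x0 + u0 * t else x0 * cos (w * t) + u0 * (sin (w * t) / w).

Definition osc_dot (w x0 u0 t : R) : R :=
  if Req_EM_T w 0 then u0 else - x0 * w * sin (w * t) + u0 * cos (w * t).

Lemma osc_0 w x0 u0 : osc w x0 u0 0 = x0.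
Proof.
  unfold osc. destruct Req_EM_T; rewrite ?Rmult_0_r, ?sin_0, ?cos_0; unfold Rdiv; ring.
Qed.

Lemma osc_dot_0 w x0 u0 : osc_dot w x0 u0 0 = u0.
Proof.
  unfold osc_dot. destruct Req_EM_T; rewrite ?Rmult_0_r, ?sin_0, ?cos_0; ring.
Qed.

Lemma is_derive_osc w x0 u0 t : is_derive (osc w x0 u0) t (osc_dot w x0 u0 t).
Proof. unfold osc, osc_dot. destruct Req_EM_T; auto_derive; auto; field; auto. Qed.

Lemma is_derive_osc_dot w x0 u0 t :
  is_derive (osc_dot w x0 u0) t (- (w ^ 2) * osc w x0 u0 t).
Proof. unfold osc, osc_dot. destruct Req_EM_T as [->|]; auto_derive; auto; field; auto. Qed.

Lemma osc_unique (w x0 u0 : R) (x u : R -> R) :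
  x 0 = x0 -> u 0 = u0 ->
  (forall t, is_derive x t (u t)) -> (forall t, is_derive u t (- (w ^ 2) * x t)) ->
  forall t, x t = osc w x0 u0 t.
Proof.
  intros x_0 u_0 Dx Du t.
  enough (x t - osc w x0 u0 t = 0) by lra.
  revert t. apply (harmonic_zero w _ (fun t => u t - osc_dot w x0 u0 t)).
  - rewrite x_0, osc_0. ring.
  - cbv beta. rewrite u_0, osc_dot_0. ring.
  - intro t. apply (is_derive_minus x (osc w x0 u0)); [apply Dx | apply is_derive_osc].
  - intro t. evar (l : R). replace (- (w ^ 2) * (x t - osc w x0 u0 t)) with l.
    + apply (is_derive_minus u (osc_dot w x0 u0)); [apply Du | apply is_derive_osc_dot].
    + unfold l, minus, plus, opp; simpl. ring.
Qed.

Definition zcoord (x0 y0 z0 u v w t : R) : R :=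
  if Req_EM_T w 0 then z0 else
  z0 + (x0 ^ 2 + y0 ^ 2) * ((w * t + sin (w * t) * cos (w * t)) / 2)
     + (u ^ 2 + v ^ 2) * ((w * t - sin (w * t) * cos (w * t)) / (2 * w ^ 2))
     + (x0 * u + y0 * v) * (sin (w * t) ^ 2 / w).

Lemma zcoord_0 x0 y0 z0 u v w : zcoord x0 y0 z0 u v w 0 = z0.
Proof.
  unfold zcoord. destruct Req_EM_T; rewrite ?Rmult_0_r, ?sin_0, ?cos_0; unfold Rdiv; ring.
Qed.

Lemma is_derive_zcoord x0 y0 z0 u v w t :
  is_derive (zcoord x0 y0 z0 u v w) t ((osc w x0 u t ^ 2 + osc w y0 v t ^ 2) * w).
Proof.
  unfold zcoord, osc. destruct Req_EM_T as [->|w0]; auto_derive; auto; [ring|].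
  pose proof (sin2_cos2 (w * t)) as Pyth. unfold Rsqr in Pyth.
  field_simplify; auto. replace (cos (w * t) ^ 2) with (1 - sin (w * t) ^ 2) by lra.
  field; auto.
Qed.

Definition exp_formula (x0 y0 z0 : R) (l : R3) : R3 :=
  let '(u, v, w) := l in (osc w x0 u 1, osc w y0 v 1, zcoord x0 y0 z0 u v w 1).

Lemma Exp_normal_flow x0 y0 z0 Gam :
  normal_flow (x0, y0, z0) Gam -> Exp Gam = exp_formula x0 y0 z0.
Proof.
  intros Hflow. apply functional_extensionality. intros [[u v] w].
  destruct (Hflow ((u, v), w)) as (U & V & W & x_0 & y_0 & z_0 & u_0 & v_0 & w_0 & D).
  set (x := fun t => fst (fst (Gam (u, v, w) t))) in *.
  set (y := fun t => snd (fst (Gam (u, v, w) t))) in *.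
  set (z := fun t => snd (Gam (u, v, w) t)) in *.
  assert (HW : forall t, W t = w).
  { intro t. rewrite <- w_0. apply is_derive_0_const. intro s. apply D. }
  assert (HX : forall t, x t = osc w x0 u t).
  { apply (osc_unique w x0 u x U); auto; intro t; rewrite <- ?(HW t); apply D. }
  assert (HY : forall t, y t = osc w y0 v t).
  { apply (osc_unique w y0 v y V); auto; intro t; rewrite <- ?(HW t); apply D. }
  assert (Derr : forall t, is_derive (fun t => z t - zcoord x0 y0 z0 u v w t) t 0).
  { intro t.
    replace 0 with (minus ((x t ^ 2 + y t ^ 2) * W t)
                          ((osc w x0 u t ^ 2 + osc w y0 v t ^ 2) * w)).
    - apply (is_derive_minus z (zcoord x0 y0 z0 u v w)); [apply D | apply is_derive_zcoord].
    - rewrite HX, HY, HW. unfold minus, plus, opp; simpl. ring. }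
  assert (HZ : z 1 = zcoord x0 y0 z0 u v w 1).
  { pose proof (is_derive_0_const _ Derr 1) as E. cbv beta in E.
    change (z 0 = z0) in z_0. rewrite z_0, zcoord_0 in E. lra. }
  unfold Exp. simpl. rewrite <- HX, <- HY, <- HZ.
  unfold x, y, z. destruct (Gam (u, v, w) 1) as [[p q] r]. reflexivity.
Qed.

Ltac R3_simpl := repeat (progress (unfold plus, scal, prod_plus, prod_scal, mult; simpl)).

Lemma R3_line a b c e1 e2 e3 t :
  plus ((a, b), c) (scal t ((e1, e2), e3)) = ((a + t * e1, b + t * e2), c + t * e3) :> R3.
Proof. R3_simpl. reflexivity. Qed.

Lemma R3_comb h1 h2 h3 a11 a21 a31 a12 a22 a32 a13 a23 a33 :
  plus (plus (scal h1 ((a11, a21), a31)) (scal h2 ((a12, a22), a32))) (scal h3 ((a13, a23), a33))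
  = ((h1 * a11 + h2 * a12 + h3 * a13, h1 * a21 + h2 * a22 + h3 * a23),
     h1 * a31 + h2 * a32 + h3 * a33) :> R3.
Proof. R3_simpl. reflexivity. Qed.

Lemma linear_R3_expand (L : R3 -> R3) : is_linear L ->
  forall h1 h2 h3, L ((h1, h2), h3) =
    plus (plus (scal h1 (L ((1, 0), 0))) (scal h2 (L ((0, 1), 0)))) (scal h3 (L ((0, 0), 1))).
Proof.
  intros HL h1 h2 h3. rewrite <- !(linear_scal L HL), <- !(linear_plus L HL).
  f_equal. R3_simpl. f_equal; [f_equal|]; ring.
Qed.

Definition det3 (c1 c2 c3 : R3) : R :=
  let '((a11, a21), a31) := c1 in
  let '((a12, a22), a32) := c2 in
  let '((a13, a23), a33) := c3 in
  a11 * (a22 * a33 - a23 * a32) - a12 * (a21 * a33 - a23 * a31)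
  + a13 * (a21 * a32 - a22 * a31).

Lemma linear_R3_surj_of_det (L : R3 -> R3) : is_linear L ->
  det3 (L ((1, 0), 0)) (L ((0, 1), 0)) (L ((0, 0), 1)) <> 0 ->
  forall y : R3, exists h, L h = y.
Proof.
  intros HL Hdet [[y1 y2] y3].
  destruct (L ((1, 0), 0)) as [[a11 a21] a31] eqn:E1.
  destruct (L ((0, 1), 0)) as [[a12 a22] a32] eqn:E2.
  destruct (L ((0, 0), 1)) as [[a13 a23] a33] eqn:E3.
  simpl in Hdet.
  set (d := a11 * (a22 * a33 - a23 * a32) - a12 * (a21 * a33 - a23 * a31)
            + a13 * (a21 * a32 - a22 * a31)) in Hdet.
  exists (( ((a22*a33 - a23*a32)*y1 - (a12*a33 - a13*a32)*y2 + (a12*a23 - a13*a22)*y3)/d,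
           (-(a21*a33 - a23*a31)*y1 + (a11*a33 - a13*a31)*y2 - (a11*a23 - a13*a21)*y3)/d),
           ((a21*a32 - a22*a31)*y1 - (a11*a32 - a12*a31)*y2 + (a11*a22 - a12*a21)*y3)/d).
  rewrite (linear_R3_expand L HL), E1, E2, E3, R3_comb.
  f_equal; [f_equal|]; unfold d in *; field; auto.
Qed.

Lemma linear_R3_not_surj (L : R3 -> R3) : is_linear L ->
  fst (L ((1, 0), 0)) = (0, 0) -> fst (L ((0, 1), 0)) = (0, 0) ->
  ~ (forall y : R3, exists h, L h = y).
Proof.
  intros HL E1 E2 Hsurj.
  destruct (L ((1, 0), 0)) as [p1 a31] eqn:F1. destruct (L ((0, 1), 0)) as [p2 a32] eqn:F2.
  destruct (L ((0, 0), 1)) as [[a13 a23] a33] eqn:F3. simpl in E1, E2. subst p1 p2.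
  (* the first two coordinates of the image stay on the line spanned by (a13, a23) *)
  destruct (Req_dec (a13 ^ 2 + a23 ^ 2) 0) as [Z|NZ].
  - destruct (Hsurj ((1, 0), 0)) as [[[h1 h2] h3] Hh].
    rewrite (linear_R3_expand L HL), F1, F2, F3, R3_comb in Hh.
    injection Hh as Hx Hy _. assert (a13 = 0) by nra. subst. lra.
  - destruct (Hsurj ((- a23, a13), 0)) as [[[h1 h2] h3] Hh].
    rewrite (linear_R3_expand L HL), F1, F2, F3, R3_comb in Hh.
    injection Hh as Hx Hy _. apply NZ. nra.
Qed.

Lemma is_derive_fst {V W : NormedModule R_AbsRing} (f : R -> V * W) x (l : V * W) :
  is_derive f x l -> is_derive (fun t => fst (f t)) x (fst l).
Proof.
  intros H. apply (filterdiff_comp' f fst x _ fst H).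
  apply filterdiff_linear, is_linear_fst.
Qed.

Lemma is_derive_snd {V W : NormedModule R_AbsRing} (f : R -> V * W) x (l : V * W) :
  is_derive f x l -> is_derive (fun t => snd (f t)) x (snd l).
Proof.
  intros H. apply (filterdiff_comp' f snd x _ snd H).
  apply filterdiff_linear, is_linear_snd.
Qed.

Lemma filterdiff_line (f : R3 -> R3) a b c e1 e2 e3 L :
  filterdiff f (locally ((a, b), c)) L ->
  is_derive (fun t => f ((a + t * e1, b + t * e2), c + t * e3)) 0 (L ((e1, e2), e3)).
Proof.
  intros Hf. set (p := ((a, b), c) : R3) in Hf |- *. set (e := ((e1, e2), e3) : R3).
  apply (is_derive_ext (fun t => f (plus p (scal t e)))).
  { intro t. unfold p, e. now rewrite R3_line. }
  assert (Hline : filterdiff (fun t : R => plus p (scal t e)) (locally 0) (fun t => scal t e)).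
  { pose proof (is_derive_plus (fun _ : R => p) (fun t : R => scal t e) 0 zero _
      (is_derive_const p 0) (is_derive_scal_l (fun t : R => t) 0 one e (is_derive_id 0))) as H.
    eapply filterdiff_ext_lin; [apply H|]. intro t; simpl. now rewrite plus_zero_l, scal_one. }
  assert (Hp : plus p (scal 0 e) = p)
    by (unfold p, e; rewrite R3_line, !Rmult_0_l, !Rplus_0_r; reflexivity).
  rewrite <- Hp in Hf at 1.
  apply filterdiff_ext_lin with (1 := filterdiff_comp' _ _ 0 _ _ Hline Hf).
  intro t. apply (linear_scal L), (proj1 Hf).
Qed.

Lemma filterdiff_column (f : R3 -> R3) a b c e1 e2 e3 L d1 d2 d3 :
  filterdiff f (locally ((a, b), c)) L ->
  is_derive (fun t => fst (fst (f ((a + t * e1, b + t * e2), c + t * e3)))) 0 d1 ->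
  is_derive (fun t => snd (fst (f ((a + t * e1, b + t * e2), c + t * e3)))) 0 d2 ->
  is_derive (fun t => snd (f ((a + t * e1, b + t * e2), c + t * e3))) 0 d3 ->
  L ((e1, e2), e3) = ((d1, d2), d3).
Proof.
  intros Hf D1 D2 D3. pose proof (filterdiff_line f a b c e1 e2 e3 L Hf) as D.
  pose proof (is_derive_fst _ _ _ (is_derive_fst _ _ _ D)) as G1.
  pose proof (is_derive_snd _ _ _ (is_derive_fst _ _ _ D)) as G2.
  pose proof (is_derive_snd _ _ _ D) as G3.
  apply is_derive_unique in D1, D2, D3, G1, G2, G3.
  destruct (L ((e1, e2), e3)) as [[l1 l2] l3]. simpl in *. congruence.
Qed.

Lemma filterdiff_column_snd (f : R3 -> R3) a b c e1 e2 e3 L d3 :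
  filterdiff f (locally ((a, b), c)) L ->
  is_derive (fun t => snd (f ((a + t * e1, b + t * e2), c + t * e3))) 0 d3 ->
  snd (L ((e1, e2), e3)) = d3.
Proof.
  intros Hf D3. pose proof (is_derive_snd _ _ _ (filterdiff_line f a b c e1 e2 e3 L Hf)) as G3.
  rewrite <- (is_derive_unique _ _ _ G3). apply is_derive_unique, D3.
Qed.

Definition osc1 (w x0 u : R) : R := x0 * cos w + u * (sin w / w).

Definition zcoord1 (x0 y0 z0 u v w : R) : R :=
  z0 + (x0 ^ 2 + y0 ^ 2) * ((w + sin w * cos w) / 2)
     + (u ^ 2 + v ^ 2) * ((w - sin w * cos w) / (2 * w ^ 2))
     + (x0 * u + y0 * v) * (sin w ^ 2 / w).

Definition exp_formula_nz (x0 y0 z0 : R) (l : R3) : R3 :=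
  let '(u, v, w) := l in ((osc1 w x0 u, osc1 w y0 v), zcoord1 x0 y0 z0 u v w).

Lemma exp_formula_nz_eq x0 y0 z0 u v w : w <> 0 ->
  exp_formula x0 y0 z0 ((u, v), w) = exp_formula_nz x0 y0 z0 ((u, v), w).
Proof.
  intros w0. unfold exp_formula, exp_formula_nz, osc, zcoord, osc1, zcoord1.
  destruct Req_EM_T; [contradiction|]. now rewrite Rmult_1_r.
Qed.

Lemma exp_formula_near_nz x0 y0 z0 a b c : c <> 0 ->
  locally ((a, b), c) (fun l => exp_formula x0 y0 z0 l = exp_formula_nz x0 y0 z0 l).
Proof.
  intros c0. exists (mkposreal (Rabs c) (Rabs_pos_lt c c0)).
  intros [[u v] w] [_ Hw]. change (Rabs (w - c) < Rabs c) in Hw.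
  apply exp_formula_nz_eq. intros ->. rewrite Rminus_0_l, Rabs_Ropp in Hw. lra.
Qed.

Lemma critical_exp_formula_nz x0 y0 z0 a b c : c <> 0 ->
  critical_point (exp_formula x0 y0 z0) ((a, b), c) <->
  critical_point (exp_formula_nz x0 y0 z0) ((a, b), c).
Proof.
  intros c0. pose proof (exp_formula_near_nz x0 y0 z0 a b c c0) as Hloc.
  split; intros [L [HL Hns]]; exists L; split; auto.
  - exact (filterdiff_ext_locally _ _ _ L Hloc HL).
  - refine (filterdiff_ext_locally _ _ _ L _ HL).
    apply (filter_imp _ _ (fun l (E : _ = _) => eq_sym E) Hloc).
Qed.

Ltac solve_closed_derive :=
  auto_derive; rewrite ?Rmult_0_l, ?Rplus_0_r; repeat split;
  match goal with
  | |- _ <> _ => repeat apply Rmult_integral_contrapositive_currified; auto; lra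
  | |- _ = _ => field; auto
  end.

Definition jacobian_core (x0 y0 u v w : R) : R :=
  (sin w / w) * (x0 ^ 2 + y0 ^ 2 + (x0 * u + y0 * v))
  + (u ^ 2 + v ^ 2) * ((sin w - w * cos w) / w ^ 3).

Section exp_formula_nz_jacobian.
Variables (x0 y0 z0 a b c : R) (L : R3 -> R3).
Hypothesis c0 : c <> 0.
Hypothesis HL : filterdiff (exp_formula_nz x0 y0 z0) (locally ((a, b), c)) L.

Lemma exp_formula_nz_column_u : L ((1, 0), 0) =
  ((sin c / c, 0), a * ((c - sin c * cos c) / c ^ 2) + x0 * (sin c ^ 2 / c)).
Proof.
  apply (filterdiff_column _ _ _ _ _ _ _ _ _ _ _ HL);
    simpl; unfold osc1, zcoord1; solve_closed_derive.
Qed.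

Lemma exp_formula_nz_column_v : L ((0, 1), 0) =
  ((0, sin c / c), b * ((c - sin c * cos c) / c ^ 2) + y0 * (sin c ^ 2 / c)).
Proof.
  apply (filterdiff_column _ _ _ _ _ _ _ _ _ _ _ HL);
    simpl; unfold osc1, zcoord1; solve_closed_derive.
Qed.

Lemma exp_formula_nz_column_w : L ((0, 0), 1) =
  ((- x0 * sin c + a * ((c * cos c - sin c) / c ^ 2),
    - y0 * sin c + b * ((c * cos c - sin c) / c ^ 2)),
   (x0 ^ 2 + y0 ^ 2) * ((1 + cos c * cos c - sin c * sin c) / 2)
   + (a ^ 2 + b ^ 2) * ((1 - cos c * cos c + sin c * sin c) / (2 * c ^ 2)
                        - (c - sin c * cos c) / c ^ 3)
   + (x0 * a + y0 * b) * (2 * sin c * cos c / c - sin c ^ 2 / c ^ 2)).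
Proof.
  apply (filterdiff_column _ _ _ _ _ _ _ _ _ _ _ HL);
    simpl; unfold osc1, zcoord1; solve_closed_derive.
Qed.

Lemma exp_formula_nz_jacobian_det :
  det3 (L ((1, 0), 0)) (L ((0, 1), 0)) (L ((0, 0), 1)) = sin c / c * jacobian_core x0 y0 a b c.
Proof.
  rewrite exp_formula_nz_column_u, exp_formula_nz_column_v, exp_formula_nz_column_w.
  unfold det3, jacobian_core.
  assert (Pyth : cos c * cos c = 1 - sin c * sin c)
    by (pose proof (sin2_cos2 c) as P; unfold Rsqr in P; lra).
  replace (1 + cos c * cos c - sin c * sin c) with (2 - 2 * sin c * sin c) by lra.
  replace (1 - cos c * cos c + sin c * sin c) with (2 * sin c * sin c) by lra.
  field_simplify; auto. replace (cos c ^ 2) with (1 - sin c ^ 2) by (simpl; lra).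
  field; auto.
Qed.

End exp_formula_nz_jacobian.

Lemma pos_of_is_derive_pos (f f' : R -> R) (w : R) : 0 < w -> f 0 = 0 ->
  (forall t, is_derive f t (f' t)) -> (forall t, 0 < t < w -> 0 < f' t) -> 0 < f w.
Proof.
  intros w_pos f_0 Df Hpos.
  destruct (MVT_cor2 f f' 0 w) as (t & Ht & Hint);
    [lra | intros t _; apply is_derive_Reals, Df |].
  rewrite f_0 in Ht. specialize (Hpos t Hint). nra.
Qed.

Lemma sin_sub_mul_cos_pos (w : R) : 0 < w < PI -> 0 < sin w - w * cos w.
Proof.
  intros Hw.
  apply (pos_of_is_derive_pos (fun t => sin t - t * cos t) (fun t => t * sin t)); try lra.
  - cbv beta. rewrite sin_0, cos_0. ring.
  - intro t. auto_derive; auto. ring.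
  - intros t Ht. pose proof (sin_gt_0 t ltac:(lra) ltac:(lra)). nra.
Qed.

Lemma jacobian_core_factor_pos (w : R) : 0 < w < PI ->
  0 < sin w * (4 - w ^ 2) - 4 * w * cos w.
Proof.
  intros Hw.
  apply (pos_of_is_derive_pos (fun t => sin t * (4 - t ^ 2) - 4 * t * cos t)
           (fun t => t * (2 * sin t - t * cos t))); try lra.
  - cbv beta. rewrite sin_0, cos_0. ring.
  - intro t. auto_derive; auto. ring.
  - intros t Ht. pose proof (sin_gt_0 t ltac:(lra) ltac:(lra)).
    pose proof (sin_sub_mul_cos_pos t ltac:(lra)). nra.
Qed.

Lemma jacobian_core_even x0 y0 u v w :
  w <> 0 -> jacobian_core x0 y0 u v (- w) = jacobian_core x0 y0 u v w.
Proof. intros w0. unfold jacobian_core. rewrite sin_neg, cos_neg. field. auto. Qed.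

Lemma jacobian_core_pos_right x0 y0 u v w : x0 ^ 2 + y0 ^ 2 <> 0 -> 0 < w < PI ->
  0 < jacobian_core x0 y0 u v w.
Proof.
  intros Hr Hw.
  set (S := sin w / w). set (al := (sin w - w * cos w) / w ^ 3).
  assert (HS : 0 < S) by (apply Rdiv_lt_0_compat; [apply sin_gt_0|]; lra).
  assert (Hal : 0 < 4 * al - S).
  { replace (4 * al - S) with ((sin w * (4 - w ^ 2) - 4 * w * cos w) / w ^ 3)
      by (unfold al, S; field; lra).
    apply Rdiv_lt_0_compat; [apply jacobian_core_factor_pos; lra | apply pow_lt; lra]. }
  (* complete the square in (x0, y0) *)
  replace (jacobian_core x0 y0 u v w) with
    (S * ((x0 + u / 2) ^ 2 + (y0 + v / 2) ^ 2) + (u ^ 2 + v ^ 2) * (4 * al - S) / 4)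
    by (unfold jacobian_core; fold S al; field; lra).
  destruct (Req_dec (u ^ 2 + v ^ 2) 0) as [Z|NZ].
  - assert (u = 0 /\ v = 0) as [-> ->] by (split; nra).
    replace ((x0 + 0 / 2) ^ 2 + (y0 + 0 / 2) ^ 2) with (x0 ^ 2 + y0 ^ 2) by field.
    assert (0 < x0 ^ 2 + y0 ^ 2) by nra. nra.
  - assert (0 < u ^ 2 + v ^ 2) by (pose proof (pow2_ge_0 u); pose proof (pow2_ge_0 v); lra).
    assert (0 <= (x0 + u / 2) ^ 2 + (y0 + v / 2) ^ 2)
      by (pose proof (pow2_ge_0 (x0 + u / 2)); pose proof (pow2_ge_0 (y0 + v / 2)); lra).
    assert (0 < (u ^ 2 + v ^ 2) * (4 * al - S)) by (apply Rmult_lt_0_compat; lra).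
    assert (0 <= S * ((x0 + u / 2) ^ 2 + (y0 + v / 2) ^ 2)) by (apply Rmult_le_pos; lra).
    lra.
Qed.

Lemma jacobian_core_pos x0 y0 u v w : x0 ^ 2 + y0 ^ 2 <> 0 -> 0 < Rabs w < PI ->
  0 < jacobian_core x0 y0 u v w.
Proof.
  intros Hr Hw. destruct (Rle_or_lt 0 w).
  - rewrite Rabs_pos_eq in Hw by lra. apply jacobian_core_pos_right; lra.
  - rewrite Rabs_left in Hw by lra. rewrite <- jacobian_core_even by lra.
    apply jacobian_core_pos_right; lra.
Qed.

Lemma sin_neq_0_lt_PI (c : R) : 0 < Rabs c < PI -> sin c <> 0.
Proof.
  intros Hc. destruct (Rle_or_lt 0 c).
  - rewrite Rabs_pos_eq in Hc by lra. pose proof (sin_gt_0 c). lra.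
  - rewrite Rabs_left in Hc by lra. pose proof (sin_gt_0 (- c)). rewrite sin_neg in *. lra.
Qed.

Lemma exp_formula_nz_not_critical x0 y0 z0 a b c :
  x0 ^ 2 + y0 ^ 2 <> 0 -> 0 < Rabs c < PI ->
  ~ critical_point (exp_formula_nz x0 y0 z0) ((a, b), c).
Proof.
  intros Hr Hc [L [HL Hns]]. apply Hns, (linear_R3_surj_of_det L (proj1 HL)).
  assert (c0 : c <> 0) by (intros ->; rewrite Rabs_R0 in Hc; lra).
  rewrite (exp_formula_nz_jacobian_det x0 y0 z0 a b c L c0 HL).
  pose proof (sin_neq_0_lt_PI c Hc). pose proof (jacobian_core_pos x0 y0 a b c Hr Hc).
  apply Rmult_integral_contrapositive_currified; [|lra].
  unfold Rdiv. apply Rmult_integral_contrapositive_currified; auto. now apply Rinv_neq_0_compat.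
Qed.

(* At [sin c = 0] the first two columns of the Jacobian are vertical. *)
Lemma exp_formula_nz_critical_of_sin_0 x0 y0 z0 a b c : c <> 0 -> sin c = 0 ->
  ex_filterdiff (exp_formula_nz x0 y0 z0) (locally ((a, b), c)) ->
  critical_point (exp_formula_nz x0 y0 z0) ((a, b), c).
Proof.
  intros c0 s0 [L HL]. exists L. split; auto.
  apply (linear_R3_not_surj L (proj1 HL)).
  - rewrite (exp_formula_nz_column_u x0 y0 z0 a b c L c0 HL), s0. simpl. f_equal. field. auto.
  - rewrite (exp_formula_nz_column_v x0 y0 z0 a b c L c0 HL), s0. simpl. f_equal. field. auto.
Qed.

Lemma ex_filterdiff_pair {T U V : NormedModule R_AbsRing} (f : T -> U) (g : T -> V) (p : T) :
  ex_filterdiff f (locally p) -> ex_filterdiff g (locally p) ->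
  ex_filterdiff (fun l => (f l, g l)) (locally p).
Proof.
  intros Hf Hg. apply (ex_filterdiff_comp'_2 f g pair p Hf Hg).
  apply ex_filterdiff_linear, (is_linear_ext (fun t => t)); [now intros [] | apply is_linear_id].
Qed.

Lemma ex_filterdiff_Rplus {U : NormedModule R_AbsRing} (f g : U -> R) (p : U) :
  ex_filterdiff f (locally p) -> ex_filterdiff g (locally p) ->
  ex_filterdiff (fun l => f l + g l) (locally p).
Proof. intros Hf Hg. exact (ex_filterdiff_plus_fct f g Hf Hg). Qed.

Lemma ex_filterdiff_Rmult {U : NormedModule R_AbsRing} (f g : U -> R) (p : U) :
  ex_filterdiff f (locally p) -> ex_filterdiff g (locally p) ->
  ex_filterdiff (fun l => f l * g l) (locally p).
Proof. intros Hf Hg. exact (ex_filterdiff_mult_fct f g p Rmult_comm Hf Hg). Qed.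

Lemma ex_filterdiff_Rcomp {U : NormedModule R_AbsRing} (phi : R -> R) (f : U -> R) (p : U) :
  ex_filterdiff f (locally p) -> ex_derive phi (f p) ->
  ex_filterdiff (fun l => phi (f l)) (locally p).
Proof. intros Hf Hphi. apply (ex_filterdiff_comp' f phi p Hf), ex_derive_filterdiff, Hphi. Qed.

Lemma ex_filterdiff_R3_u (p : R3) : ex_filterdiff (fun l : R3 => fst (fst l)) (locally p).
Proof.
  apply ex_filterdiff_linear, (is_linear_comp (fun l : R3 => fst l) fst); apply is_linear_fst.
Qed.

Lemma ex_filterdiff_R3_v (p : R3) : ex_filterdiff (fun l : R3 => snd (fst l)) (locally p).
Proof.
  apply ex_filterdiff_linear, (is_linear_comp (fun l : R3 => fst l) snd);
    [apply is_linear_fst | apply is_linear_snd].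
Qed.

Lemma ex_filterdiff_R3_w (p : R3) : ex_filterdiff (fun l : R3 => snd l) (locally p).
Proof. apply ex_filterdiff_linear, is_linear_snd. Qed.

Ltac solve_ex_filterdiff :=
  repeat match goal with
  | |- ex_filterdiff (fun l => (@?f l, @?g l)) _ => apply (ex_filterdiff_pair f g)
  | |- ex_filterdiff (fun l => @?f l + @?g l) _ => apply (ex_filterdiff_Rplus f g)
  | |- ex_filterdiff (fun l => @?f l * @?g l) _ => apply (ex_filterdiff_Rmult f g)
  | |- ex_filterdiff (fun l => fst (fst l)) _ => apply ex_filterdiff_R3_u
  | |- ex_filterdiff (fun l => snd (fst l)) _ => apply ex_filterdiff_R3_v
  | |- ex_filterdiff (fun l => snd l) _ => apply ex_filterdiff_R3_w
  | |- ex_filterdiff (fun _ => ?k) _ => apply (ex_filterdiff_const k)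
  | |- ex_filterdiff (fun l => fst (fst l) ^ 2) _ =>
      apply (ex_filterdiff_Rcomp (fun t => t ^ 2) (fun l : R3 => fst (fst l)))
  | |- ex_filterdiff (fun l => snd (fst l) ^ 2) _ =>
      apply (ex_filterdiff_Rcomp (fun t => t ^ 2) (fun l : R3 => snd (fst l)))
  end.

Lemma exp_formula_nz_differentiable x0 y0 z0 a b c : c <> 0 ->
  ex_filterdiff (exp_formula_nz x0 y0 z0) (locally ((a, b), c)).
Proof.
  intros c0.
  apply (ex_filterdiff_ext
           (fun l => ((osc1 (snd l) x0 (fst (fst l)), osc1 (snd l) y0 (snd (fst l))),
                      zcoord1 x0 y0 z0 (fst (fst l)) (snd (fst l)) (snd l)))).
  { now intros [[u v] w]. }
  unfold osc1, zcoord1. solve_ex_filterdiff;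
    [ apply (ex_filterdiff_Rcomp cos (fun l : R3 => snd l))
    | apply (ex_filterdiff_Rcomp (fun t => sin t / t) (fun l : R3 => snd l))
    | apply (ex_filterdiff_Rcomp cos (fun l : R3 => snd l))
    | apply (ex_filterdiff_Rcomp (fun t => sin t / t) (fun l : R3 => snd l))
    | apply (ex_filterdiff_Rcomp (fun t => (t + sin t * cos t) / 2) (fun l : R3 => snd l))
    | idtac | idtac
    | apply (ex_filterdiff_Rcomp (fun t => (t - sin t * cos t) / (2 * t ^ 2))
                                 (fun l : R3 => snd l))
    | apply (ex_filterdiff_Rcomp (fun t => sin t ^ 2 / t) (fun l : R3 => snd l)) ];
    try apply ex_filterdiff_R3_w; simpl; auto_derive; repeat split; auto;
    repeat apply Rmult_integral_contrapositive_currified; auto; lra.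
Qed.

Lemma sin_taylor_right (x : R) : 0 <= x <= 4 ->
  x - x ^ 3 / 6 <= sin x <= x - x ^ 3 / 6 + x ^ 5 / 120.
Proof.
  intros Hx. pose proof (pre_sin_bound x 0 (proj1 Hx) (proj2 Hx)) as B.
  unfold sin_approx, sin_term in B. simpl in B. unfold INR in B. simpl in B. lra.
Qed.

Lemma sin_sub_id_bound (x : R) : Rabs x <= 4 -> Rabs (sin x - x) <= Rabs x ^ 3 / 6.
Proof.
  assert (right : forall x, 0 <= x <= 4 -> Rabs (sin x - x) <= x ^ 3 / 6).
  { intros y Hy. pose proof (sin_taylor_right y Hy).
    assert (y ^ 5 / 120 <= y ^ 3 / 3).
    { assert (0 <= y ^ 3) by (apply pow_le; lra). assert (y * y <= 16) by nra.
      replace (y ^ 5) with (y ^ 3 * (y * y)) by ring. nra. }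
    apply Rabs_le. lra. }
  intros Hx. destruct (Rle_or_lt 0 x).
  - rewrite (Rabs_pos_eq x) in * by lra. now apply right.
  - rewrite (Rabs_left x) in * by lra. replace (sin x - x) with (- (sin (- x) - - x))
      by (rewrite sin_neg; field). rewrite Rabs_Ropp. apply right. lra.
Qed.

Lemma sin_cubic_bound (x : R) : Rabs x <= 4 ->
  Rabs (x - sin x - x ^ 3 / 6) <= Rabs x ^ 5 / 120.
Proof.
  assert (right : forall x, 0 <= x <= 4 -> Rabs (x - sin x - x ^ 3 / 6) <= x ^ 5 / 120).
  { intros y Hy. pose proof (sin_taylor_right y Hy). apply Rabs_le. lra. }
  intros Hx. destruct (Rle_or_lt 0 x).
  - rewrite (Rabs_pos_eq x) in * by lra. now apply right.
  - rewrite (Rabs_left x) in * by lra. replace (x - sin x - x ^ 3 / 6)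
      with (- (- x - sin (- x) - (- x) ^ 3 / 6)) by (rewrite sin_neg; field).
    rewrite Rabs_Ropp. apply right. lra.
Qed.

Lemma is_derive_of_linear_error (g : R -> R) (K M delta : R) : 0 < delta ->
  (forall h, h <> 0 -> Rabs h <= delta -> Rabs ((g h - g 0) / h - K) <= M * Rabs h) ->
  is_derive g 0 K.
Proof.
  intros Hdelta Herr. apply is_derive_Reals. intros eps Heps.
  set (M' := Rabs M + 1).
  assert (HM' : 0 < M') by (unfold M'; pose proof (Rabs_pos M); lra).
  assert (Hd : 0 < Rmin delta (eps / M'))
    by (apply Rmin_glb_lt; [lra | apply Rdiv_lt_0_compat; lra]).
  exists (mkposreal _ Hd). intros h Hh Hhd. simpl in Hhd. rewrite Rplus_0_l.
  pose proof (Rmin_l delta (eps / M')). pose proof (Rmin_r delta (eps / M')).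
  apply Rle_lt_trans with (M * Rabs h); [apply Herr; auto; lra|].
  assert (Rabs h * M' < eps).
  { replace eps with (eps / M' * M') by (field; lra). apply Rmult_lt_compat_r; lra. }
  pose proof (Rle_abs M). pose proof (Rabs_pos h). unfold M' in *. nra.
Qed.

Lemma abs_div_le (n d B : R) : d <> 0 -> Rabs n <= B * Rabs d -> Rabs (n / d) <= B.
Proof.
  intros Hd H. unfold Rdiv. rewrite Rabs_mult, Rabs_inv.
  assert (0 < Rabs d) by (apply Rabs_pos_lt; auto).
  apply Rmult_le_reg_r with (Rabs d); auto. rewrite Rmult_assoc, Rinv_l by lra. lra.
Qed.

(* The closed form [zcoord1] is singular at [w = 0], so the derivative in [w] is obtained
   from the Taylor bounds on [sin] instead. *)
Lemma is_derive_zcoord_w0 x0 y0 z0 a b :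
  is_derive (fun w => zcoord x0 y0 z0 a b w 1) 0
    ((x0 ^ 2 + y0 ^ 2) + (x0 * a + y0 * b) + (a ^ 2 + b ^ 2) / 3).
Proof.
  set (rho := x0 ^ 2 + y0 ^ 2). set (P := a ^ 2 + b ^ 2). set (Q := x0 * a + y0 * b).
  assert (Hr : 0 <= rho) by (unfold rho; nra). assert (HP : 0 <= P) by (unfold P; nra).
  apply (is_derive_of_linear_error _ _ (rho / 3 + P / 15 + Rabs Q / 2) 1); [lra|].
  intros h h0 Hh. pose proof (Rabs_pos h) as Hh0.
  assert (h2 : h ^ 2 <= Rabs h) by (rewrite <- pow2_abs; nra).
  assert (Hh2 : Rabs (2 * h) <= 4) by (rewrite Rabs_mult, Rabs_pos_eq; lra).
  unfold zcoord. destruct (Req_EM_T h 0); [contradiction|].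
  destruct (Req_EM_T 0 0); [|contradiction].
  rewrite Rmult_1_r. fold rho P Q.
  replace ((z0 + rho * ((h + sin h * cos h) / 2) + P * ((h - sin h * cos h) / (2 * h ^ 2))
            + Q * (sin h ^ 2 / h) - z0) / h - (rho + Q + P / 3))
    with (rho * ((sin (2 * h) - 2 * h) / (4 * h))
          + P * ((2 * h - sin (2 * h) - (2 * h) ^ 3 / 6) / (4 * h ^ 3))
          + Q * ((sin h - h) * (sin h + h) / h ^ 2))
    by (rewrite sin_2a; field; auto).
  assert (B1 : Rabs ((sin (2 * h) - 2 * h) / (4 * h)) <= h ^ 2 / 3).
  { apply abs_div_le; [lra|]. pose proof (sin_sub_id_bound _ Hh2) as S.
    rewrite Rabs_mult, (Rabs_pos_eq 2) in S by lra.
    rewrite Rabs_mult, (Rabs_pos_eq 4), <- pow2_abs by lra. lra. }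
  assert (B2 : Rabs ((2 * h - sin (2 * h) - (2 * h) ^ 3 / 6) / (4 * h ^ 3)) <= h ^ 2 / 15).
  { apply abs_div_le.
    { apply Rmult_integral_contrapositive_currified; [lra | now apply pow_nonzero]. }
    pose proof (sin_cubic_bound _ Hh2) as S.
    rewrite Rabs_mult, (Rabs_pos_eq 2) in S by lra.
    rewrite Rabs_mult, (Rabs_pos_eq 4), <- RPow_abs, <- pow2_abs by lra. lra. }
  assert (B3 : Rabs ((sin h - h) * (sin h + h) / h ^ 2) <= h ^ 2 / 2).
  { apply abs_div_le; [now apply pow_nonzero|].
    pose proof (sin_sub_id_bound h ltac:(lra)) as S1.
    assert (S2 : Rabs (sin h + h) <= 3 * Rabs h).
    { replace (sin h + h) with ((sin h - h) + 2 * h) by ring.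
      eapply Rle_trans; [apply Rabs_triang|]. rewrite Rabs_mult, (Rabs_pos_eq 2) by lra. nra. }
    rewrite Rabs_mult, <- RPow_abs, <- pow2_abs.
    pose proof (Rabs_pos (sin h - h)). pose proof (Rabs_pos (sin h + h)). nra. }
  eapply Rle_trans; [apply Rabs_triang|].
  eapply Rle_trans; [apply Rplus_le_compat_r, Rabs_triang|].
  rewrite !Rabs_mult, (Rabs_pos_eq rho), (Rabs_pos_eq P) by auto.
  pose proof (Rabs_pos Q).
  apply Rle_trans with (rho * (h ^ 2 / 3) + P * (h ^ 2 / 15) + Rabs Q * (h ^ 2 / 2)).
  - apply Rplus_le_compat; [apply Rplus_le_compat|]; apply Rmult_le_compat_l; auto.
  - nra.
Qed.

Lemma exp_formula_w0 x0 y0 z0 u v : exp_formula x0 y0 z0 ((u, v), 0) = ((x0 + u, y0 + v), z0).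
Proof.
  unfold exp_formula, osc, zcoord. destruct Req_EM_T; [|contradiction]. now rewrite !Rmult_1_r.
Qed.

(* the limit of [jacobian_core x0 y0 a b w] as [w -> 0] *)
Lemma jacobian_core_w0_pos x0 y0 a b : x0 ^ 2 + y0 ^ 2 <> 0 ->
  0 < (x0 ^ 2 + y0 ^ 2) + (x0 * a + y0 * b) + (a ^ 2 + b ^ 2) / 3.
Proof.
  intros Hr.
  replace ((x0 ^ 2 + y0 ^ 2) + (x0 * a + y0 * b) + (a ^ 2 + b ^ 2) / 3)
    with ((x0 + a / 2) ^ 2 + (y0 + b / 2) ^ 2 + (a ^ 2 + b ^ 2) / 12) by field.
  destruct (Req_dec (a ^ 2 + b ^ 2) 0) as [Z|NZ].
  - assert (a = 0 /\ b = 0) as [-> ->] by (split; nra).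
    replace ((x0 + 0 / 2) ^ 2 + (y0 + 0 / 2) ^ 2) with (x0 ^ 2 + y0 ^ 2) by field. nra.
  - assert (0 < a ^ 2 + b ^ 2) by (pose proof (pow2_ge_0 a); pose proof (pow2_ge_0 b); lra).
    pose proof (pow2_ge_0 (x0 + a / 2)). pose proof (pow2_ge_0 (y0 + b / 2)). lra.
Qed.

Ltac horizontal_column :=
  match goal with HL : filterdiff _ _ _ |- _ =>
    apply (filterdiff_column _ _ _ _ _ _ _ _ _ _ _ HL);
    (eapply is_derive_ext;
       [intro t; symmetry; rewrite Rmult_0_r, Rplus_0_l, exp_formula_w0; reflexivity|]);
    simpl; auto_derive; auto; ring
  end.

Lemma exp_formula_not_critical_w0 x0 y0 z0 a b : x0 ^ 2 + y0 ^ 2 <> 0 ->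
  ~ critical_point (exp_formula x0 y0 z0) ((a, b), 0).
Proof.
  intros Hr [L [HL Hns]]. apply Hns, (linear_R3_surj_of_det L (proj1 HL)).
  assert (E1 : L ((1, 0), 0) = ((1, 0), 0)) by horizontal_column.
  assert (E2 : L ((0, 1), 0) = ((0, 1), 0)) by horizontal_column.
  assert (E3 : snd (L ((0, 0), 1)) =
                 (x0 ^ 2 + y0 ^ 2) + (x0 * a + y0 * b) + (a ^ 2 + b ^ 2) / 3).
  { apply (filterdiff_column_snd _ _ _ _ _ _ _ _ _ HL).
    apply (is_derive_ext (fun w => zcoord x0 y0 z0 a b w 1)).
    - intro t. simpl. now rewrite !Rmult_0_r, !Rplus_0_r, Rplus_0_l, Rmult_1_r.
    - apply is_derive_zcoord_w0. }
  rewrite E1, E2. destruct (L ((0, 0), 1)) as [[p q] r]. simpl in E3 |- *. subst r.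
  pose proof (jacobian_core_w0_pos x0 y0 a b Hr). lra.
Qed.

Lemma not_critical_below_pi x0 y0 z0 a b c : x0 ^ 2 + y0 ^ 2 <> 0 -> Rabs c < PI ->
  ~ critical_point (exp_formula x0 y0 z0) ((a, b), c).
Proof.
  intros Hr Hc. destruct (Req_dec c 0) as [->|c0].
  - now apply exp_formula_not_critical_w0.
  - rewrite critical_exp_formula_nz by auto. apply exp_formula_nz_not_critical; auto.
    split; [now apply Rabs_pos_lt | exact Hc].
Qed.

Lemma critical_at_pi x0 y0 z0 a b c : Rabs c = PI ->
  critical_point (exp_formula x0 y0 z0) ((a, b), c).
Proof.
  intros Hc. pose proof PI_RGT_0.
  assert (c0 : c <> 0) by (intros ->; rewrite Rabs_R0 in Hc; lra).
  rewrite critical_exp_formula_nz by auto.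
  apply exp_formula_nz_critical_of_sin_0; auto; [|now apply exp_formula_nz_differentiable].
  destruct (Rle_or_lt 0 c).
  - rewrite Rabs_pos_eq in Hc by lra. subst. apply sin_PI.
  - rewrite Rabs_left in Hc by lra. replace c with (- PI) by lra.
    now rewrite sin_neg, sin_PI, Ropp_0.
Qed.

Theorem theorem13 (x0 y0 z0 u0 v0 w0 : R) (Gam : R3 -> R -> R3) :
  x0 ^ 2 + y0 ^ 2 <> 0 ->
  u0 ^ 2 + v0 ^ 2 + (x0 ^ 2 + y0 ^ 2) * w0 ^ 2 = 1 ->
  normal_flow (x0, y0, z0) Gam ->
  (w0 = 0 -> t_con Gam (u0, v0, w0) = p_infty) /\
  (w0 <> 0 -> t_con Gam (u0, v0, w0) = Finite (PI / Rabs w0)).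
Proof.
  intros Hr _ Hflow. unfold t_con. rewrite (Exp_normal_flow _ _ _ _ Hflow). simpl scal3.
  split; intros Hw; apply is_glb_Rbar_unique; split.
  - intros t [_ Hcrit]. exfalso. revert Hcrit. rewrite Hw, Rmult_0_r.
    apply not_critical_below_pi; auto. rewrite Rabs_R0. apply PI_RGT_0.
  - intros [] _; simpl; auto.
  - intros t [Ht Hcrit]. simpl. apply Rnot_lt_le. intros Hlt. revert Hcrit.
    apply not_critical_below_pi; auto.
    assert (Hw' : 0 < Rabs w0) by (now apply Rabs_pos_lt).
    rewrite Rabs_mult, (Rabs_pos_eq t) by lra.
    apply (Rmult_lt_compat_r (Rabs w0)) in Hlt; auto.
    unfold Rdiv in Hlt. rewrite Rmult_assoc, Rinv_l in Hlt; lra.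
  - intros b Hb. apply Hb.
    assert (Hw' : 0 < Rabs w0) by (now apply Rabs_pos_lt).
    split; [apply Rdiv_lt_0_compat; [apply PI_RGT_0 | exact Hw']|].
    apply critical_at_pi. rewrite Rabs_mult, Rabs_pos_eq.
    + field. lra.
    + apply Rlt_le, Rdiv_lt_0_compat; [apply PI_RGT_0 | exact Hw'].
Qed.
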